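(* Let $A,X^1,\ldots,X^m\in M_n(\mathbb{C})$ with $1\le m\le n$. Let $B$ be the $\binom{n}{m}\times\binom{n}{m}$ matrix indexed by $Q_{m,n}$ whose $(\mathcal{J},\mathcal{I})$-entry is $\operatorname{per}A(\mathcal{I}|\mathcal{J})$, and let $C=P_m(X^1\vee\cdots\vee X^m)P_m$, viewed as the $\binom{n}{m}\times\binom{n}{m}$ matrix indexed by $Q_{m,n}$ (with respect to the basis $\{e_\alpha:\alpha\in Q_{m,n}\}$). Then $$D^m\operatorname{per}(A)(X^1,\ldots,X^m)=m!\,\operatorname{tr}(BC).$$ In particular $D^m\operatorname{per}(A)(X,\ldots,X)=m!\,\operatorname{tr}\big(B\,P_m(\vee^mX)P_m\big)$.
   Context: $\mathcal{H}=\mathbb{C}^n$ with orthonormal basis $e_1,\ldots,e_n$; $G_{m,n}=\{(i_1,\ldots,i_m):1\le i_1\le\cdots\le i_m\le n\}$, $Q_{m,n}\subseteq G_{m,n}$ the strictly increasing tuples. $\vee^m\mathcal{H}$ has orthonormal basis $\{m(\alpha)^{-1/2}e_\alpha:\alpha\in G_{m,n}\}$, where $e_\alpha=e_{\alpha_1}\vee\cdots\vee e_{\alpha_m}$ and $m(\alpha)=m_1!\cdots m_\ell!$ for multiplicities $m_1,\ldots,m_\ell$ of the distinct values in $\alpha$. $X^1\vee\cdots\vee X^m$ is the restriction to $\vee^m\mathcal{H}$ of $\frac{1}{m!}\sum_{\sigma\in S_m}X^{\sigma(1)}\otimes\cdots\otimes X^{\sigma(m)}$; $\vee^mX=X\vee\cdots\vee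 X$. $P_m$ is the orthogonal projection of $\vee^m\mathcal{H}$ onto the span of $\{e_\alpha:\alpha\in Q_{m,n}\}$. $A(\mathcal{I}|\mathcal{J})$ is $A$ with rows $\mathcal{I}$, columns $\mathcal{J}$ deleted; $\operatorname{per}$ is the permanent; $D^m\operatorname{per}(A)(X^1,\ldots,X^m)=\frac{\partial^m}{\partial t_1\cdots\partial t_m}\big|_{t=0}\operatorname{per}(A+\sum_it_iX^i)$. *)

From HB Require Import structures.
From mathcomp Require Import all_boot all_order all_algebra all_fingroup.
Set Implicit Arguments. Unset Strict Implicit. Unset Printing Implicit Defensive.
Import Order.TTheory GRing.Theory Num.Theory.
Local Open Scope ring_scope.

Definition per (R : comNzRingType) (k : nat) (M : 'M[R]_k) : R :=
  \sum_(s : 'S_k) \prod_(i < k) M i (s i).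

(* mpoly R k = R[t_0][t_1]...[t_{k-1}] (iterated univariate polynomials). *)
Fixpoint mpoly (R : comNzRingType) (k : nat) : comNzRingType :=
  match k with
  | 0 => R
  | k'.+1 => GRing.ComNzRing.clone _ {poly (mpoly R k')}
  end.

Fixpoint mconst (R : comNzRingType) (k : nat) : R -> mpoly R k :=
  match k return R -> mpoly R k with
  | 0 => fun x => x
  | k'.+1 => fun x => (mconst k' x)%:P
  end.

Fixpoint mvar (R : comNzRingType) (k : nat) : nat -> mpoly R k :=
  match k return nat -> mpoly R k with
  | 0 => fun _ => 0
  | k'.+1 => fun i => if i == k' then 'X else (@mvar R k' i)%:P
  end.

Fixpoint mderiv (R : comNzRingType) (k : nat) : nat -> mpoly R k -> mpoly R k :=
  match k return nat -> mpoly R k -> mpoly R k with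
  | 0 => fun _ p => 0
  | k'.+1 => fun i (p : {poly mpoly R k'}) =>
      if i == k' then deriv p else map_poly (@mderiv R k' i) p
  end.

Fixpoint meval0 (R : comNzRingType) (k : nat) : mpoly R k -> R :=
  match k return mpoly R k -> R with
  | 0 => fun p => p
  | k'.+1 => fun (p : {poly mpoly R k'}) => @meval0 R k' p.[0]
  end.

(* D^m per(A)(X^1,...,X^m)
   = d^m/dt_1...dt_m |_{t=0} per(A + sum_i t_i X^i)  (formal derivatives). *)
Definition Dper (R : comNzRingType) (n m : nat) (A : 'M[R]_n)
    (X : 'I_m -> 'M[R]_n) : R :=
  let M : 'M[mpoly R m]_n :=
    \matrix_(r, c) (mconst m (A r c)
                    + \sum_(i < m) mvar R m i * mconst m (X i r c)) in
  meval0 (foldr (fun i p => mderiv i p) (per M) (iota 0 m)).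

(* ---------- Q_{m,n} : strictly increasing maps 'I_m -> 'I_n ---------- *)
Definition incr (m n : nat) (a : {ffun 'I_m -> 'I_n}) : bool :=
  [forall i : 'I_m, forall j : 'I_m, (i < j)%N ==> (a i < a j)%N].

(* A(I|J): A with the rows in I and the columns in J deleted
   (remaining rows/columns in increasing order). *)
Definition del_mx (R : comNzRingType) (n m : nat) (A : 'M[R]_n)
    (I J : {ffun 'I_m -> 'I_n}) : 'M[R]_(n - m) :=
  conform_mx (0 : 'M[R]_(n - m))
    (mxsub (enum_val : 'I_#|~: [set I k | k : 'I_m]| -> 'I_n)
           (enum_val : 'I_#|~: [set J k | k : 'I_m]| -> 'I_n) A).

(* vectors of (C^n)^{(x)m} are functions on multi-indices 'I_m -> 'I_n,
   coordinates w.r.t. the basis e_{a_1} (x) ... (x) e_{a_m}. *)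
Definition tvec (C : numClosedFieldType) (m n : nat) :=
  {ffun 'I_m -> 'I_n} -> C.

Definition tinner (C : numClosedFieldType) (m n : nat) (u v : tvec C m n) : C :=
  \sum_(a : {ffun 'I_m -> 'I_n}) (u a)^* * v a.

Definition tensor_op (C : numClosedFieldType) (m n : nat)
    (X : 'I_m -> 'M[C]_n) (v : tvec C m n) : tvec C m n :=
  fun a => \sum_(b : {ffun 'I_m -> 'I_n}) (\prod_(k < m) X k (a k) (b k)) * v b.

Definition sym_op (C : numClosedFieldType) (m n : nat)
    (X : 'I_m -> 'M[C]_n) (v : tvec C m n) : tvec C m n :=
  fun a => (m`!%:R)^-1 *
    \sum_(s : 'S_m) tensor_op (fun k => X (s k)) v a.

(* e_alpha = e_{alpha_1} v ... v e_{alpha_m}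
           = (m!)^{-1/2} sum_sigma e_{alpha_sigma(1)} (x) ... (x) e_{alpha_sigma(m)}
   (the normalisation for which {m(alpha)^{-1/2} e_alpha} is orthonormal) *)
Definition sym_basis (C : numClosedFieldType) (m n : nat)
    (alpha : {ffun 'I_m -> 'I_n}) : tvec C m n :=
  fun a => (sqrtC (m`!%:R))^-1 *
    \sum_(s : 'S_m) (a == [ffun k => alpha (s k)])%:R.

(* P_m : orthogonal projection onto span{e_alpha : alpha in Q_{m,n}}
   (an orthonormal family) *)
Definition Pm (C : numClosedFieldType) (m n : nat) (v : tvec C m n) : tvec C m n :=
  fun a => \sum_(alpha : {ffun 'I_m -> 'I_n} | incr alpha)
             tinner (sym_basis C alpha) v * sym_basis C alpha a.

Definition Cmx (C : numClosedFieldType) (m n : nat) (X : 'I_m -> 'M[C]_n)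
    (I J : {ffun 'I_m -> 'I_n}) : C :=
  tinner (sym_basis C I) (Pm (sym_op X (Pm (sym_basis C J)))).

From HB Require Import structures.
From mathcomp Require Import all_boot all_order all_algebra all_fingroup.
Set Implicit Arguments. Unset Strict Implicit. Unset Printing Implicit Defensive.
Import Order.TTheory GRing.Theory Num.Theory.
Local Open Scope ring_scope.

(* Expanding per (A + sum_i t_i X^i) and keeping the coefficient of t_1...t_m
   selects, for every permutation s, an injective assignment f of the variables
   to rows, the rows f i carrying an entry of X^i and the others an entry of A.
   Grouping by the column map g = s o f gives
     D^m per(A)(X^1,...,X^m) = sum_(f, g injective) prod_i X^i_(f i, g i) * per A(f|g).
   On the other side <e_I, P_m (X^1 v ... v X^m) P_m e_J> is (m!)^-2 times a sum
   over three permutations of products of entries of the X^i, and since every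
   injective map is uniquely an increasing map composed with a permutation, the
   sum m! tr(BC) collapses to the same double sum over injective f and g. *)

Section MixedDerivative.
Variable R : comNzRingType.

Definition mixed_deriv k (p : mpoly R k) : R :=
  meval0 (foldr (fun i p => @mderiv R k i p) p (iota 0 k)).
Arguments mixed_deriv : clear implicits.

Lemma mderiv0 k i : @mderiv R k i 0 = 0.
Proof. by case: k => [|k] //=; case: (i == k); rewrite ?deriv0 ?map_poly0. Qed.

Lemma foldr_mderivS k s (q : {poly mpoly R k}) : all (fun i => i != k) s ->
  foldr (fun i p => @mderiv R k.+1 i p) q s =
  map_poly (fun c => foldr (fun i p => @mderiv R k i p) c s) q.
Proof.
elim: s => [|i s IH] /=; first by rewrite map_poly_id.
case/andP => /negbTE ik /IH ->; rewrite ik -map_poly_comp_id0 //.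
exact: mderiv0.
Qed.

(* Only the coefficient of the last variable t_k survives derivation in t_k
   followed by evaluation at 0. *)
Lemma mixed_derivS k (p : {poly mpoly R k}) : mixed_deriv k.+1 p = mixed_deriv k p`_1.
Proof.
rewrite /mixed_deriv.
have -> : iota 0 k.+1 = iota 0 k ++ [:: k] by rewrite -addn1 iotaD.
rewrite foldr_cat /= eqxx foldr_mderivS; last first.
  by apply/allP => i; rewrite mem_iota add0n => /andP[_]; rewrite neq_ltn => ->.
rewrite horner_coef0 coef_map_id0 ?coef_deriv ?mulr1n //.
by elim: (iota 0 k) => //= j s ->; rewrite mderiv0.
Qed.

Lemma mixed_derivD k (p q : mpoly R k) :
  mixed_deriv k (p + q) = mixed_deriv k p + mixed_deriv k q.
Proof. by elim: k p q => // k IH p q; rewrite !mixed_derivS coefD IH. Qed.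

Lemma mixed_deriv0 k : mixed_deriv k 0 = 0.
Proof. by elim: k => // k IH; rewrite mixed_derivS coef0. Qed.

Lemma mixed_deriv_sum k (I : finType) (P : pred I) (F : I -> mpoly R k) :
  mixed_deriv k (\sum_(i | P i) F i) = \sum_(i | P i) mixed_deriv k (F i).
Proof. exact: (big_morph _ (@mixed_derivD k) (mixed_deriv0 k)). Qed.

Lemma mixed_derivZ k c (p : mpoly R k) :
  mixed_deriv k (mconst k c * p) = c * mixed_deriv k p.
Proof. by elim: k p => // k IH p; rewrite !mixed_derivS /= coefCM IH. Qed.

End MixedDerivative.
Arguments mixed_deriv {R} k p.

Lemma coef0_prod_linear (R : comNzRingType) (T : Type) (s : seq T) (c d : T -> R) :
  (\prod_(r <- s) ((c r)%:P + 'X * (d r)%:P))`_0 = \prod_(r <- s) c r.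
Proof.
rewrite (big_morph _ (@coef0M R) (@coef1 R 0)).
by apply: eq_bigr => r _; rewrite coefD coefC coefXM addr0.
Qed.

Lemma coef1_prod_linear (R : comNzRingType) (T : eqType) (s : seq T) (c d : T -> R) :
  uniq s ->
  (\prod_(r <- s) ((c r)%:P + 'X * (d r)%:P))`_1 =
     \sum_(r <- s) d r * \prod_(r' <- s | r' != r) c r'.
Proof.
elim: s => [|r0 s IH]; first by rewrite !big_nil coef1.
rewrite cons_uniq => /andP[r0s /IH {}IH].
rewrite !big_cons mulrDl coefD -mulrA coefCM coefXM /= IH coefCM.
rewrite coef0_prod_linear eqxx addrC; congr (_ + _).
  congr (_ * _); rewrite big_seq_cond [RHS]big_seq_cond; apply: eq_bigl => r /=.
  rewrite andbT; case rs: (r \in s) => //=.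
  by apply/esym; apply: contraNneq r0s => <-.
rewrite mulr_sumr !big_seq; apply: eq_bigr => r rs.
rewrite big_cons; have -> : r0 != r by apply: contraNneq r0s => ->.
by rewrite mulrCA.
Qed.

Section FfunRcons.
Variables (T : finType) (k : nat).

Definition ffun_rcons (p : T * {ffun 'I_k -> T}) : {ffun 'I_k.+1 -> T} :=
  [ffun i => if unlift ord_max i is Some j then p.2 j else p.1].

Definition ffun_unrcons (g : {ffun 'I_k.+1 -> T}) : T * {ffun 'I_k -> T} :=
  (g ord_max, [ffun j => g (lift ord_max j)]).

Lemma ffun_rconsK : cancel ffun_rcons ffun_unrcons.
Proof.
move=> [r f]; rewrite /ffun_unrcons ffunE unlift_none; congr (_, _).
by apply/ffunP => j; rewrite !ffunE liftK.
Qed.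

Lemma ffun_unrconsK : cancel ffun_unrcons ffun_rcons.
Proof.
by move=> g; apply/ffunP => i; rewrite ffunE; case: unliftP => [j|] ->; rewrite ?ffunE.
Qed.

Lemma ffun_rcons_bij : bijective ffun_rcons.
Proof. exact: Bijective ffun_rconsK ffun_unrconsK. Qed.

Lemma ffun_rcons_max p : ffun_rcons p ord_max = p.1.
Proof. by rewrite ffunE unlift_none. Qed.

Lemma ffun_rcons_widen p j : ffun_rcons p (widen_ord (leqnSn k) j) = p.2 j.
Proof.
have -> : widen_ord (leqnSn k) j = lift ord_max j.
  by apply: val_inj; rewrite /= -[LHS](lift_max j).
by rewrite ffunE liftK.
Qed.

Lemma codom_ffun_rcons p : codom (ffun_rcons p) = rcons (codom p.2) p.1.
Proof.
rewrite !codomE enum_ordSr map_rcons -map_comp ffun_rcons_max; congr rcons.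
by apply: eq_map => j /=; rewrite ffun_rcons_widen.
Qed.

End FfunRcons.

Section AffineProduct.
Variables (R : comNzRingType) (n : nat) (a : 'I_n -> R) (x : 'I_n -> nat -> R).

Definition affine_form k (r : 'I_n) : mpoly R k :=
  mconst k (a r) + \sum_(i < k) mvar R k i * mconst k (x r i).

Lemma affine_formS k r :
  affine_form k.+1 r = (affine_form k r)%:P + 'X * (mconst k (x r k))%:P.
Proof.
rewrite /affine_form big_ord_recr /= eqxx rmorphD rmorph_sum addrA.
congr (_ + _ + _); apply: eq_bigr => i _.
by rewrite /= ifN ?rmorphM // neq_ltn ltn_ord.
Qed.

Lemma mixed_deriv_prod_affineS k (S : {set 'I_n}) :
  mixed_deriv k.+1 (\prod_(r in S) affine_form k.+1 r) =
  \sum_(r in S) x r k * mixed_deriv k (\prod_(r' in S :\ r) affine_form k r').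
Proof.
under eq_bigr do rewrite affine_formS.
rewrite -big_enum mixed_derivS coef1_prod_linear ?enum_uniq // big_enum.
rewrite mixed_deriv_sum; apply: eq_bigr => r _.
rewrite mixed_derivZ big_enum_cond; congr (_ * mixed_deriv k _).
by apply: eq_bigl => r'; rewrite in_setD1 andbC.
Qed.

Lemma mixed_deriv_prod_affine k (S : {set 'I_n}) :
  mixed_deriv k (\prod_(r in S) affine_form k r) =
  \sum_(f : {ffun 'I_k -> 'I_n} | uniq (codom f) && all (mem S) (codom f))
     (\prod_(i < k) x (f i) i) * \prod_(r in S | r \notin codom f) a r.
Proof.
elim: k S => [|k IH] S.
  rewrite (big_pred1 (ffun0 (card_ord 0))); last first.
    by move=> f; rewrite /= codomE enum_ord0; apply/esym/eqP/ffunP => -[].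
  rewrite big_ord0 mul1r codomE enum_ord0.
  by apply: eq_big => [r|r _]; rewrite ?andbT // /affine_form big_ord0 addr0.
rewrite mixed_deriv_prod_affineS.
under eq_bigr do rewrite IH mulr_sumr.
rewrite pair_big_dep (reindex (@ffun_rcons _ k)); last exact/onW_bij/ffun_rcons_bij.
apply: eq_big => [[r f]|[r f] _] /=.
  have -> : all (mem (S :\ r)) (codom f) = (r \notin codom f) && all (mem S) (codom f).
    by rewrite -has_pred1 -all_predC -all_predI; apply: eq_all => y; rewrite /= in_setD1.
  rewrite codom_ffun_rcons rcons_uniq all_rcons /=.
  by case: (r \in S); case: (r \in codom f); case: (uniq (codom f)).
rewrite big_ord_recr /= ffun_rcons_max mulrA [x r k * _]mulrC; congr (_ * _ * _).
  by apply: eq_bigr => i _; rewrite ffun_rcons_widen.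
apply: eq_bigl => r'; rewrite codom_ffun_rcons mem_rcons in_cons in_setD1.
by case: (r' == r); case: (r' \in S); case: (r' \in codom f).
Qed.

End AffineProduct.

Lemma insubd_permE (T : finType) (g : {ffun T -> T}) x :
  injectiveb g -> insubd (1%g : {perm T}) g x = g x.
Proof. by move=> g_inj; rewrite -pvalE insubdK. Qed.

Section IncreasingRearrangement.
Variables m n : nat.

Let ltv : rel 'I_n := relpre val ltn.
Let ltv_trans : transitive ltv. Proof. by move=> y x z; apply: ltn_trans. Qed.
Let ltv_irr : irreflexive ltv. Proof. by move=> x; apply: ltnn. Qed.

Lemma incr_inj (I : {ffun 'I_m -> 'I_n}) : incr I -> injective I.
Proof.
move=> /forallP I_incr i j Eij; apply/eqP; case: (ltngtP i j) => [lt|lt|/val_inj -> //].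
  by move: (I_incr i) => /forallP /(_ j) /implyP /(_ lt); rewrite Eij ltnn.
by move: (I_incr j) => /forallP /(_ i) /implyP /(_ lt); rewrite Eij ltnn.
Qed.

Lemma sorted_enum_ord_set (S : {set 'I_n}) : sorted ltv (enum S).
Proof.
have : sorted ltv (enum 'I_n).
  by have := iota_ltn_sorted 0 n; rewrite -val_enum_ord sorted_map.
apply: subseq_sorted; first exact: ltv_trans.
rewrite /enum_mem.
by rewrite [X in subseq _ X](@eq_filter _ _ predT) // filter_predT filter_subseq.
Qed.

Lemma imset_ffun_perm (I : {ffun 'I_m -> 'I_n}) (u : {perm 'I_m}) :
  [set [ffun k => I (u k)] i | i in 'I_m] = [set I i | i in 'I_m].
Proof.
apply/setP => y; apply/imsetP/imsetP => [[i _ ->]|[i _ ->]].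
  by exists (u i); rewrite ?ffunE.
by exists (u^-1%g i); rewrite // ffunE permKV.
Qed.

Lemma enum_imset_incr (I : {ffun 'I_m -> 'I_n}) : incr I ->
  enum [set I i | i in 'I_m] = map I (enum 'I_m).
Proof.
move=> I_incr; apply: (irr_sorted_eq ltv_trans ltv_irr).
- exact: sorted_enum_ord_set.
- rewrite sorted_map.
  have : sorted (relpre val ltn) (enum 'I_m).
    by have := iota_ltn_sorted 0 m; rewrite -val_enum_ord sorted_map.
  apply: sub_sorted => i j /= lt.
  by move/forallP: I_incr => /(_ i) /forallP /(_ j) /implyP /(_ lt).
- move=> y; rewrite mem_enum; apply/imsetP/mapP => [] [i _ ->];
    by exists i; rewrite ?mem_enum.
Qed.

Definition incr_sort (f : {ffun 'I_m -> 'I_n}) : {ffun 'I_m -> 'I_n} :=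
  [ffun k => nth (f k) (enum [set f i | i in 'I_m]) k].

Lemma size_enum_imset (f : {ffun 'I_m -> 'I_n}) : injective f ->
  size (enum [set f i | i in 'I_m]) = m.
Proof. by move=> f_inj; rewrite -cardE card_imset // card_ord. Qed.

Lemma incr_sort_perm (I : {ffun 'I_m -> 'I_n}) (u : {perm 'I_m}) : incr I ->
  incr_sort [ffun k => I (u k)] = I.
Proof.
move=> I_incr; apply/ffunP => k; rewrite ffunE imset_ffun_perm enum_imset_incr //.
by rewrite (nth_map k) ?size_enum_ord // nth_ord_enum.
Qed.

Lemma incr_sort_incr (f : {ffun 'I_m -> 'I_n}) : injective f -> incr (incr_sort f).
Proof.
move=> f_inj; apply/forallP => i; apply/forallP => j; apply/implyP => lt.
have size_f := size_enum_imset f_inj.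
rewrite !ffunE (set_nth_default (f j) (f i)) ?size_f //.
by apply: (sorted_ltn_nth ltv_trans (f j) (sorted_enum_ord_set _)); rewrite // inE size_f.
Qed.

Lemma incr_sort_onto (f : {ffun 'I_m -> 'I_n}) : injective f ->
  forall k, exists j, incr_sort f j = f k.
Proof.
move=> f_inj k; set s := enum [set f i | i in 'I_m].
have fk_s : f k \in s by rewrite mem_enum; apply/imsetP; exists k.
have lt_m : (index (f k) s < m)%N by rewrite -[X in (_ < X)%N](size_enum_imset f_inj) index_mem.
by exists (Ordinal lt_m); rewrite ffunE /= nth_index.
Qed.

(* The permutation [u] with [f = incr_sort f \o u]; the identity fallback of
   [insubd] is never used when [f] is injective. *)
Definition sort_perm (f : {ffun 'I_m -> 'I_n}) : {perm 'I_m} :=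
  insubd (1%g : {perm 'I_m}) [ffun k => odflt k [pick j | incr_sort f j == f k]].

Lemma sort_permE (f : {ffun 'I_m -> 'I_n}) : injective f ->
  forall k, incr_sort f (sort_perm f k) = f k.
Proof.
move=> f_inj.
set g := [ffun k => odflt k [pick j | incr_sort f j == f k]].
have gE k : incr_sort f (g k) = f k.
  rewrite [g k]ffunE; case: (pickP (fun j => incr_sort f j == f k)) => [j /eqP //|none].
  by have [j Ej] := incr_sort_onto f_inj k; move: (none j); rewrite Ej eqxx.
have g_inj : injectiveb g by apply/injectiveP => k1 k2 E; apply: f_inj; rewrite -!gE E.
by move=> k; rewrite /sort_perm insubd_permE.
Qed.

Lemma sum_injective_incr (R : nmodType) (F : {ffun 'I_m -> 'I_n} -> R) :
  \sum_(f : {ffun 'I_m -> 'I_n} | injectiveb f) F f =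
  \sum_(I : {ffun 'I_m -> 'I_n} | incr I) \sum_(u : {perm 'I_m}) F [ffun k => I (u k)].
Proof.
rewrite pair_big_dep /=.
rewrite (reindex_onto (fun p : {ffun 'I_m -> 'I_n} * {perm 'I_m} => [ffun k => p.1 (p.2 k)])
  (fun f => (incr_sort f, sort_perm f))) /=; last first.
  by move=> f /injectiveP f_inj; apply/ffunP => k; rewrite ffunE sort_permE.
apply: eq_bigl => -[I u] /=; rewrite andbT.
case I_incr: (incr I); last first.
  apply/negbTE/andP => -[/injectiveP f_inj /eqP [I_sort _]].
  by move: (incr_sort_incr f_inj); rewrite I_sort I_incr.
have f_inj : injective [ffun k => I (u k)].
  by move=> k1 k2; rewrite !ffunE => /(incr_inj I_incr) /perm_inj.
rewrite (introT (injectiveP _) f_inj) incr_sort_perm //=.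
suff -> : sort_perm [ffun k => I (u k)] = u by rewrite eqxx.
apply/permP => k; apply: (incr_inj I_incr).
by rewrite -{1}(incr_sort_perm u I_incr) sort_permE // ffunE.
Qed.

Lemma sum_injective_perm (R : nmodType) (s : {perm 'I_m}) (F : {ffun 'I_m -> 'I_n} -> R) :
  \sum_(f : {ffun 'I_m -> 'I_n} | injectiveb f) F f =
  \sum_(f : {ffun 'I_m -> 'I_n} | injectiveb f) F [ffun k => f (s k)].
Proof.
rewrite (reindex (fun f : {ffun 'I_m -> 'I_n} => [ffun k => f (s k)])); last first.
  apply: onW_bij; exists (fun f : {ffun 'I_m -> 'I_n} => [ffun k => f (s^-1%g k)]).
    by move=> f; apply/ffunP => k; rewrite !ffunE permKV.
  by move=> f; apply/ffunP => k; rewrite !ffunE permK.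
apply: eq_bigl => f; apply/injectiveP/injectiveP => f_inj k1 k2.
  by move=> E; apply/(@perm_inj _ s^-1%g)/f_inj; rewrite !ffunE !permKV.
by rewrite !ffunE => /f_inj /perm_inj.
Qed.

End IncreasingRearrangement.

Lemma per_conform_mx (R : comNzRingType) k p q (M : 'M[R]_(p, q))
    (ep : p = k) (eq : q = k) :
  per (conform_mx (0 : 'M[R]_k) M) =
  \sum_(t : 'S_p) \prod_(i < p) M i (cast_ord (etrans ep (esym eq)) (t i)).
Proof.
subst k q; rewrite conform_mx_id; apply: eq_bigr => t _.
by apply: eq_bigr => i _; rewrite cast_ord_id.
Qed.

Lemma card_setC_imset n m (f : 'I_m -> 'I_n) : injective f ->
  #|~: [set f k | k in 'I_m]| = (n - m)%N.
Proof.
move=> f_inj; have := cardsC [set f k | k in 'I_m]; rewrite card_imset // card_ord.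
by move=> E; rewrite -[X in (X - m)%N](card_ord n) -E addKn.
Qed.

Section MinorPermanent.
Variables (R : comNzRingType) (n m : nat) (A : 'M[R]_n).
Variables f g : {ffun 'I_m -> 'I_n}.
Hypotheses (f_inj : injective f) (g_inj : injective g).

Let Sf := [set f k | k in 'I_m].
Let Sg := [set g k | k in 'I_m].
Let p := #|~: Sf|.
Let eq_card : p = #|~: Sg| :=
  etrans (card_setC_imset f_inj) (esym (card_setC_imset g_inj)).
(* The rows and the columns of the minor A(f|g), in increasing order. *)
Let ef (i : 'I_p) : 'I_n := enum_val i.
Let eg (i : 'I_p) : 'I_n := enum_val (cast_ord eq_card i).

Let ef_inj : injective ef. Proof. exact: enum_val_inj. Qed.
Let eg_inj : injective eg. Proof. by move=> i j /enum_val_inj /cast_ord_inj. Qed.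
Let ef_notin i : ef i \notin Sf.
Proof. by have := enum_valP i; rewrite in_setC. Qed.
Let eg_notin i : eg i \notin Sg.
Proof. by have := enum_valP (cast_ord eq_card i); rewrite in_setC. Qed.
Let f_in k : f k \in Sf. Proof. exact: imset_f. Qed.
Let g_in k : g k \in Sg. Proof. exact: imset_f. Qed.

Let eg_onto r : r \notin Sg -> exists i, eg i = r.
Proof.
rewrite -in_setC => r_out; exists (cast_ord (esym eq_card) (enum_rank_in r_out r)).
by rewrite /eg cast_ordKV enum_rankK_in.
Qed.

Let row_cases r : (exists k, r = f k) \/ (exists i, r = ef i).
Proof.
have [/imsetP[k _ ->]|r_out] := boolP (r \in Sf); first by left; exists k.
rewrite -in_setC in r_out.
by right; exists (enum_rank_in r_out r); rewrite /ef enum_rankK_in.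
Qed.

Definition extend_ffun (t : 'S_p) : {ffun 'I_n -> 'I_n} :=
  [ffun r => if [pick k | f k == r] is Some k then g k
             else if [pick i | ef i == r] is Some i then eg (t i) else r].

Lemma extend_ffun_f t k : extend_ffun t (f k) = g k.
Proof.
rewrite ffunE; case: pickP => [k' /eqP /f_inj -> //|none].
by move: (none k); rewrite eqxx.
Qed.

Lemma extend_ffun_ef t i : extend_ffun t (ef i) = eg (t i).
Proof.
rewrite ffunE; case: pickP => [k /eqP fk|_]; first by move: (ef_notin i); rewrite -fk f_in.
case: pickP => [i' /eqP /ef_inj -> //|none].
by move: (none i); rewrite eqxx.
Qed.

Lemma extend_ffun_inj t : injectiveb (extend_ffun t).
Proof.
apply/injectiveP => r1 r2.
have [[k1 ->]|[i1 ->]] := row_cases r1; have [[k2 ->]|[i2 ->]] := row_cases r2;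
  rewrite ?extend_ffun_f ?extend_ffun_ef.
- by move/g_inj ->.
- by move=> E; move: (eg_notin (t i2)); rewrite -E g_in.
- by move=> E; move: (eg_notin (t i1)); rewrite E g_in.
- by move/eg_inj/perm_inj ->.
Qed.

(* The permutations of 'I_n mapping each f k to g k are exactly the
   extensions of permutations of the complementary index sets. *)
Definition extend_perm (t : 'S_p) : 'S_n := insubd (1%g : 'S_n) (extend_ffun t).

Lemma extend_permE t r : extend_perm t r = extend_ffun t r.
Proof. by rewrite /extend_perm insubd_permE // extend_ffun_inj. Qed.

Definition restrict_ffun (s : 'S_n) : {ffun 'I_p -> 'I_p} :=
  [ffun i => odflt i [pick j | eg j == s (ef i)]].

Definition restrict_perm (s : 'S_n) : 'S_p := insubd (1%g : 'S_p) (restrict_ffun s).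

Lemma restrict_ffunE (s : 'S_n) : [forall k, s (f k) == g k] ->
  forall i, eg (restrict_ffun s i) = s (ef i).
Proof.
move=> /forallP sfg i.
have s_out : s (ef i) \notin Sg.
  apply/imsetP => -[k _ Ek]; move: (sfg k); rewrite -Ek => /eqP /perm_inj Ek'.
  by move: (ef_notin i); rewrite -Ek' f_in.
rewrite ffunE; case: pickP => [j /eqP //|none].
by have [j Ej] := eg_onto s_out; move: (none j); rewrite Ej eqxx.
Qed.

Lemma restrict_permE (s : 'S_n) : [forall k, s (f k) == g k] ->
  forall i, eg (restrict_perm s i) = s (ef i).
Proof.
move=> sfg i; have inj : injectiveb (restrict_ffun s).
  apply/injectiveP => i1 i2 E; apply/ef_inj/(@perm_inj _ s).
  by rewrite -!restrict_ffunE // E.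
by rewrite /restrict_perm insubd_permE // restrict_ffunE.
Qed.

Lemma per_del_mxE :
  per (del_mx A f g) =
  \sum_(s : 'S_n | [forall k, s (f k) == g k]) \prod_(r | r \notin Sf) A r (s r).
Proof.
rewrite /del_mx (per_conform_mx _ (card_setC_imset f_inj) (card_setC_imset g_inj)).
have ext_fg t : [forall k, extend_perm t (f k) == g k].
  by apply/forallP => k; rewrite extend_permE extend_ffun_f.
rewrite [RHS](reindex_onto extend_perm restrict_perm) /=; last first.
  move=> s sfg; apply/permP => r; rewrite extend_permE.
  have [[k ->]|[i ->]] := row_cases r; rewrite ?extend_ffun_f ?extend_ffun_ef.
    by move/forallP: sfg => /(_ k) /eqP ->.
  by rewrite restrict_permE.
apply: eq_big => [t|t _].
  rewrite ext_fg; apply/esym/eqP/permP => i; apply: eg_inj.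
  by rewrite restrict_permE // extend_permE extend_ffun_ef.
rewrite (eq_bigl (fun r => r \in ~: Sf)); last by move=> r; rewrite !inE.
rewrite [RHS]big_enum_val; apply: eq_bigr => i _.
by rewrite mxE extend_permE extend_ffun_ef.
Qed.

End MinorPermanent.

Lemma sumr_delta (R : nzSemiRingType) (T : finType) (b : T) (F : T -> R) :
  \sum_(a : T) (a == b)%:R * F a = F b.
Proof.
rewrite (bigD1 b) //= eqxx mul1r big1 ?addr0 // => a /negbTE ->.
by rewrite mul0r.
Qed.

Section SymmetricBasis.
Variables (C : numClosedFieldType) (m n : nat).

Local Notation fm := (m`!%:R : C).
Local Notation c := (sqrtC fm)^-1.

Lemma natr_fact_neq0 : fm != 0.
Proof. by rewrite pnatr_eq0 -lt0n fact_gt0. Qed.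

Lemma tinner_sym_basis (alpha : {ffun 'I_m -> 'I_n}) (v : tvec C m n) :
  tinner (sym_basis C alpha) v = c * \sum_(u : 'S_m) v [ffun k => alpha (u k)].
Proof.
have c_ge0 : 0 <= c by rewrite invr_ge0 sqrtC_ge0 ler0n.
rewrite /tinner /sym_basis.
rewrite (eq_bigr (fun a => c * (\sum_(u : 'S_m) (a == [ffun k => alpha (u k)])%:R) * v a)); last first.
  by move=> a _; rewrite geC0_conj // mulr_ge0 // sumr_ge0 // => u _; rewrite ler0n.
under eq_bigr => a _ do rewrite -mulrA mulr_suml.
rewrite -mulr_sumr exchange_big /=; congr (_ * _); apply: eq_bigr => u _.
exact: sumr_delta.
Qed.

Lemma eq_ffun_perm (alpha beta : {ffun 'I_m -> 'I_n}) (u t : 'S_m) :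
  incr alpha -> incr beta ->
  ([ffun k => alpha (u k)] == [ffun k => beta (t k)]) = (alpha == beta) && (u == t).
Proof.
move=> a_incr b_incr; apply/eqP/andP => [E|[/eqP <- /eqP <-] //].
have ab : alpha = beta by rewrite -(incr_sort_perm u a_incr) E incr_sort_perm.
subst beta; split => //; apply/eqP/permP => k; apply: (incr_inj a_incr).
by move/ffunP: E => /(_ k); rewrite !ffunE.
Qed.

Lemma sym_basis_orthonormal (alpha beta : {ffun 'I_m -> 'I_n}) :
  incr alpha -> incr beta ->
  tinner (sym_basis C alpha) (sym_basis C beta) = (alpha == beta)%:R.
Proof.
move=> a_incr b_incr; rewrite tinner_sym_basis /sym_basis.
under eq_bigr => u _ do rewrite mulr_sumr.
rewrite mulr_sumr.
under eq_bigr => u _ do under eq_bigr => t _ do rewrite eq_ffun_perm //.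
case: (alpha == beta) => /=; last first.
  by rewrite big1 // => u _; rewrite big1 ?mulr0 // => t _; rewrite mulr0.
rewrite (eq_bigr (fun _ => c * c)); last first.
  move=> u _; congr (_ * _); rewrite (bigD1 u) //= eqxx mulr1 big1 ?addr0 //.
  by move=> t; rewrite eq_sym => /negbTE ->; rewrite mulr0.
rewrite sumr_const card_Sn -invfM -expr2 sqrtCK -[_ *+ _]mulr_natr mulVf //.
exact: natr_fact_neq0.
Qed.

Lemma eq_tinner (u v w : tvec C m n) : v =1 w -> tinner u v = tinner u w.
Proof. by move=> vw; apply: eq_bigr => a _; rewrite vw. Qed.

Lemma Pm_sym_basis (J : {ffun 'I_m -> 'I_n}) : incr J ->
  Pm (sym_basis C J) =1 sym_basis C J.
Proof.
move=> J_incr a; rewrite /Pm (bigD1 J) //= sym_basis_orthonormal // eqxx mul1r.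
rewrite big1 ?addr0 // => alpha /andP[a_incr neJ].
by rewrite sym_basis_orthonormal // (negbTE neJ) mul0r.
Qed.

(* P_m is self-adjoint and fixes e_I. *)
Lemma tinner_sym_basis_Pm (I : {ffun 'I_m -> 'I_n}) (w : tvec C m n) : incr I ->
  tinner (sym_basis C I) (Pm w) = tinner (sym_basis C I) w.
Proof.
move=> I_incr; rewrite {1}/tinner /Pm.
under eq_bigr => a _ do rewrite mulr_sumr.
rewrite exchange_big /=.
have term alpha : \sum_a (sym_basis C I a)^* * (tinner (sym_basis C alpha) w * sym_basis C alpha a)
    = tinner (sym_basis C alpha) w * tinner (sym_basis C I) (sym_basis C alpha).
  by rewrite /tinner mulr_sumr; apply: eq_bigr => a _; rewrite mulrCA.
rewrite (bigD1 I) //= term sym_basis_orthonormal // eqxx mulr1 big1 ?addr0 //.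
by move=> alpha /andP[a_incr neI]; rewrite term sym_basis_orthonormal // eq_sym (negbTE neI) mulr0.
Qed.

Lemma eq_sym_op (X : 'I_m -> 'M[C]_n) (v w : tvec C m n) :
  v =1 w -> sym_op X v =1 sym_op X w.
Proof.
move=> vw a; congr (_ * _); apply: eq_bigr => s _.
by apply: eq_bigr => b _; rewrite vw.
Qed.

Lemma sym_op_sym_basis (X : 'I_m -> 'M[C]_n) (J : {ffun 'I_m -> 'I_n}) a :
  sym_op X (sym_basis C J) a =
  fm^-1 * (c * \sum_(s : 'S_m) \sum_(t : 'S_m) \prod_(k < m) X (s k) (a k) (J (t k))).
Proof.
rewrite /sym_op /tensor_op /sym_basis; congr (_ * _); rewrite mulr_sumr.
apply: eq_bigr => s _.
under eq_bigr => b _ do rewrite mulrCA mulr_sumr.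
rewrite -mulr_sumr; congr (_ * _); rewrite exchange_big /=; apply: eq_bigr => t _.
under eq_bigr => b _ do rewrite mulrC.
by rewrite sumr_delta; apply: eq_bigr => k _; rewrite ffunE.
Qed.

Lemma CmxE (X : 'I_m -> 'M[C]_n) (I J : {ffun 'I_m -> 'I_n}) : incr I -> incr J ->
  Cmx X I J = fm^-1 * fm^-1 *
    \sum_(u : 'S_m) \sum_(s : 'S_m) \sum_(t : 'S_m) \prod_(k < m) X (s k) (I (u k)) (J (t k)).
Proof.
move=> I_incr J_incr.
rewrite /Cmx tinner_sym_basis_Pm // (eq_tinner _ (eq_sym_op X (Pm_sym_basis J_incr))).
rewrite tinner_sym_basis.
under eq_bigr => u _ do rewrite sym_op_sym_basis mulrCA.
rewrite -mulr_sumr mulrA -invfM -expr2 sqrtCK -mulr_sumr mulrA.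
congr (_ * _); apply: eq_bigr => u _; apply: eq_bigr => s _; apply: eq_bigr => t _.
by apply: eq_bigr => k _; rewrite ffunE.
Qed.

End SymmetricBasis.

Lemma mem_imset_codom (aT rT : finType) (f : aT -> rT) y :
  (y \in [set f x | x in aT]) = (y \in codom f).
Proof. by apply/imsetP/codomP => -[x] => [_|] ->; exists x. Qed.

Section MinorExpansion.
Variables (R : comNzRingType) (n m : nat) (A : 'M[R]_n) (X : 'I_m -> 'M[R]_n).

Lemma Dper_expand :
  Dper A X = \sum_(s : 'S_n) \sum_(f : {ffun 'I_m -> 'I_n} | injectiveb f)
    (\prod_(i < m) X i (f i) (s (f i))) *
    \prod_(r | r \notin [set f i | i in 'I_m]) A r (s r).
Proof.
rewrite /Dper -/(mixed_deriv m _) mixed_deriv_sum; apply: eq_bigr => s _.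
pose x r (i : nat) := if insub i is Some j then X j r (s r) else 0.
have xE r (i : 'I_m) : x r i = X i r (s r) by rewrite /x valK.
rewrite (eq_bigl (mem [set: 'I_n])) => [|r]; last by rewrite !inE.
rewrite (eq_bigr (affine_form (fun r => A r (s r)) x m)) => [|r _]; last first.
  by rewrite mxE /affine_form; congr (_ + _); apply: eq_bigr => i _; rewrite xE.
rewrite mixed_deriv_prod_affine; apply: eq_big => [f|f _].
  rewrite -[injectiveb f]/(uniq (codom f)); apply: andb_idr => _.
  by apply/allP => r; rewrite /= in_setT.
congr (_ * _); first by apply: eq_bigr => i _; rewrite xE.
by apply: eq_bigl => r; rewrite in_setT mem_imset_codom.
Qed.

Lemma Dper_minor_expansion :
  Dper A X = \sum_(f : {ffun 'I_m -> 'I_n} | injectiveb f)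
    \sum_(g : {ffun 'I_m -> 'I_n} | injectiveb g)
      (\prod_(i < m) X i (f i) (g i)) * per (del_mx A f g).
Proof.
rewrite Dper_expand exchange_big; apply: eq_bigr => f /injectiveP f_inj.
under [RHS]eq_bigr => g /injectiveP g_inj do rewrite per_del_mxE // mulr_sumr.
rewrite (exchange_big_dep predT) //=; apply: eq_bigr => s _.
rewrite (big_pred1 [ffun k => s (f k)]); last first.
  move=> g /=; apply/andP/eqP => [[_ /forallP sfg]|->].
    by apply/ffunP => k; rewrite ffunE; move/eqP: (sfg k).
  split; last by apply/forallP => k; rewrite ffunE.
  by apply/injectiveP => k1 k2; rewrite !ffunE => /perm_inj /f_inj.
by congr (_ * _); apply: eq_bigr => i _; rewrite ffunE.
Qed.

Lemma del_mx_perm (I J : {ffun 'I_m -> 'I_n}) (u t : 'S_m) :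
  del_mx A [ffun k => I (u k)] [ffun k => J (t k)] = del_mx A I J.
Proof. by rewrite /del_mx !imset_ffun_perm. Qed.

End MinorExpansion.

Section TraceExpansion.
Variables (C : numClosedFieldType) (n m : nat) (A : 'M[C]_n) (X : 'I_m -> 'M[C]_n).

Local Notation fm := (m`!%:R : C).

Lemma sum2_injective_incr (H : {ffun 'I_m -> 'I_n} -> {ffun 'I_m -> 'I_n} -> C) :
  \sum_(I : {ffun 'I_m -> 'I_n} | incr I) \sum_(J : {ffun 'I_m -> 'I_n} | incr J)
    \sum_(u : 'S_m) \sum_(t : 'S_m) H [ffun k => I (u k)] [ffun k => J (t k)] =
  \sum_(f : {ffun 'I_m -> 'I_n} | injectiveb f)
    \sum_(g : {ffun 'I_m -> 'I_n} | injectiveb g) H f g.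
Proof.
rewrite sum_injective_incr; apply: eq_bigr => I _.
under [RHS]eq_bigr => u _ do rewrite sum_injective_incr.
exact: exchange_big.
Qed.

Lemma sum2_minor_perm (s : 'S_m) :
  \sum_(f : {ffun 'I_m -> 'I_n} | injectiveb f)
    \sum_(g : {ffun 'I_m -> 'I_n} | injectiveb g)
      per (del_mx A f g) * \prod_(k < m) X (s k) (f k) (g k) =
  \sum_(f : {ffun 'I_m -> 'I_n} | injectiveb f)
    \sum_(g : {ffun 'I_m -> 'I_n} | injectiveb g)
      (\prod_(i < m) X i (f i) (g i)) * per (del_mx A f g).
Proof.
rewrite (sum_injective_perm s); apply: eq_bigr => f _.
rewrite (sum_injective_perm s); apply: eq_bigr => g _.
rewrite del_mx_perm mulrC; congr (_ * _).
by rewrite [RHS](reindex_inj (@perm_inj _ s)); apply: eq_bigr => k _; rewrite !ffunE.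
Qed.

Lemma trace_minor_expansion :
  fm * \sum_(I : {ffun 'I_m -> 'I_n} | incr I) \sum_(J : {ffun 'I_m -> 'I_n} | incr J)
         per (del_mx A I J) * Cmx X I J =
  \sum_(f : {ffun 'I_m -> 'I_n} | injectiveb f)
    \sum_(g : {ffun 'I_m -> 'I_n} | injectiveb g)
      (\prod_(i < m) X i (f i) (g i)) * per (del_mx A f g).
Proof.
pose H s (f g : {ffun 'I_m -> 'I_n}) :=
  per (del_mx A f g) * \prod_(k < m) X (s k) (f k) (g k).
have termE I J : incr I -> incr J -> per (del_mx A I J) * Cmx X I J =
    fm^-1 * fm^-1 * \sum_(s : 'S_m) \sum_(u : 'S_m) \sum_(t : 'S_m)
      H s [ffun k => I (u k)] [ffun k => J (t k)].
  move=> I_incr J_incr; rewrite CmxE // mulrCA exchange_big; congr (_ * _).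
  rewrite mulr_sumr; apply: eq_bigr => s _; rewrite mulr_sumr; apply: eq_bigr => u _.
  rewrite mulr_sumr; apply: eq_bigr => t _; rewrite /H del_mx_perm.
  by congr (_ * _); apply: eq_bigr => k _; rewrite !ffunE.
under eq_bigr => I I_incr do under eq_bigr => J J_incr do rewrite termE //.
under eq_bigr => I _ do rewrite -mulr_sumr exchange_big /=.
rewrite -mulr_sumr exchange_big /= mulrA mulrA mulfV ?natr_fact_neq0 // mul1r.
under eq_bigr => s _ do rewrite sum2_injective_incr /H sum2_minor_perm.
rewrite sumr_const card_Sn; set L := \sum_(f | _) _.
by rewrite -(mulr_natl L) mulrA mulVf ?natr_fact_neq0 ?mul1r.
Qed.

End TraceExpansion.

Theorem theorem2p5 (C : numClosedFieldType) (n m : nat) (A : 'M[C]_n)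
    (X : 'I_m -> 'M[C]_n) :
  (1 <= m <= n)%N ->
  Dper A X =
    m`!%:R * \sum_(I : {ffun 'I_m -> 'I_n} | incr I)
               \sum_(J : {ffun 'I_m -> 'I_n} | incr J)
                 per (del_mx A I J) * Cmx X I J
  /\
  (forall Y : 'M[C]_n,
    Dper A (fun _ : 'I_m => Y) =
    m`!%:R * \sum_(I : {ffun 'I_m -> 'I_n} | incr I)
               \sum_(J : {ffun 'I_m -> 'I_n} | incr J)
                 per (del_mx A I J) * Cmx (fun _ : 'I_m => Y) I J).
Proof.
(* The identity holds for every m. *)
move=> _.
have expansion (X' : 'I_m -> 'M[C]_n) : Dper A X' = m`!%:R *
    \sum_(I : {ffun 'I_m -> 'I_n} | incr I) \sum_(J : {ffun 'I_m -> 'I_n} | incr J)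
      per (del_mx A I J) * Cmx X' I J.
  by rewrite Dper_minor_expansion trace_minor_expansion.
by split => [|Y]; apply: expansion.
Qed.
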